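(* For every monoid $M$ there is a simple or $0$-simple monoid $N$ such that $\mathfrak{L}(\mathrm{Val},\mathrm{CF},M)=\mathfrak{L}(\mathrm{Val},\mathrm{CF},N)$.
   Context: An ideal of a semigroup $S$ is $I\subseteq S$ with $S^1IS^1\subseteq I$. $S$ is simple if it has no proper ideal; $S$ with a zero is $0$-simple if its only ideals are $\{0\}$ and $S$ and $SS\ne\{0\}$. A context-free valence grammar over a monoid $N$ is $(V,T,P,S,N)$ with nonterminals $V$, terminals $T$, start symbol $S$ and a finite set $P$ of rules $(A\to\alpha,n)$ with $A\in V$, $\alpha\in(V\cup T)^*$, $n\in N$. One step: $(w_1Aw_2,m)\Rightarrow(w_1\alpha w_2,mn)$ for a rule $(A\to\alpha,n)$. The generated language is $\{w\in T^*:(S,1)\Rightarrow^*(w,1)\}$. $\mathfrak{L}(\mathrm{Val},\mathrm{CF},N)$ is the family of languages generated by such grammars over $N$. *)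

From Stdlib Require Import Relations List.
From mathcomp Require Import all_boot.
Set Implicit Arguments. Unset Strict Implicit. Unset Printing Implicit Defensive.

Record AbsMonoid : Type := {
  mcar :> Type;
  mop : mcar -> mcar -> mcar;
  munit : mcar;
  mopA : forall x y z, mop x (mop y z) = mop (mop x y) z;
  mop1x : forall x, mop munit x = x;
  mopx1 : forall x, mop x munit = x }.

(* An ideal of a semigroup S: nonempty I with S^1 I S^1 ⊆ I (for a monoid, S^1 = S). *)
Definition is_ideal (M : AbsMonoid) (I : M -> Prop) : Prop :=
  (exists x, I x) /\ forall s x t, I x -> I (@mop M (@mop M s x) t).

Definition simple_monoid (M : AbsMonoid) : Prop :=
  forall I : M -> Prop, is_ideal I -> forall x, I x.

Definition is_zero (M : AbsMonoid) (z : M) : Prop :=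
  forall x, @mop M z x = z /\ @mop M x z = z.

Definition zero_simple_monoid (M : AbsMonoid) : Prop :=
  exists z : M, @is_zero M z /\
    (forall I : M -> Prop, is_ideal I -> (forall x, I x <-> x = z) \/ (forall x, I x)) /\
    (exists x y, @mop M x y <> z).

Record valence_grammar (M : AbsMonoid) (V T : finType) : Type := {
  vg_rules : list (V * seq (V + T)%type * mcar M)%type;
  vg_start : V }.

Definition vg_step (M : AbsMonoid) (V T : finType) (G : valence_grammar M V T)
  (c c' : (seq (V + T)%type * mcar M)%type) : Prop :=
  exists w1 w2 A alpha n,
    In (A, alpha, n) (vg_rules G) /\
    c = (w1 ++ inl A :: w2, c.2) /\
    c' = (w1 ++ alpha ++ w2, @mop M c.2 n).

Definition vg_language (M : AbsMonoid) (V T : finType) (G : valence_grammar M V T)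
  (w : seq T) : Prop :=
  clos_refl_trans _ (@vg_step M V T G)
    ([:: inl (vg_start G)], munit M) ([seq inr a | a <- w], munit M).

Definition in_Val_CF (M : AbsMonoid) (T : finType) (L : seq T -> Prop) : Prop :=
  exists (V : finType) (G : valence_grammar M V T),
    forall w, L w <-> vg_language G w.

Definition same_Val_CF (M N : AbsMonoid) : Prop :=
  forall (T : finType) (L : seq T -> Prop), in_Val_CF M L <-> in_Val_CF N L.

(** In a derivation of a valence grammar over M whose final weight is 1, every
    intermediate weight m is a left factor of 1, so 1 lies in MmM: all weights
    stay in the J-class J of the identity.  Hence every weight outside J may be
    collapsed to a zero, i.e. M may be replaced by the principal factor J^0
    (J with a zero adjoined, products falling outside J set to 0) without
    changing the generated languages.  This monoid is 0-simple because every
    a in J satisfies x a y = 1 for some x, y, so an ideal containing a nonzero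
    element contains 1. *)

From mathcomp Require Import all_boot.
From Stdlib Require Import Relations List Classical ClassicalDescription ProofIrrelevance.

Set Implicit Arguments.
Unset Strict Implicit.
Unset Printing Implicit Defensive.

Local Notation "x * y" := (mop x y).

Section GrammarTransport.
Variables (M N : AbsMonoid) (f : M -> N).
Hypothesis fM : forall a b, f (a * b) = f a * f b.
Variables (V T : finType) (G : valence_grammar M V T) (H : valence_grammar N V T).
Variable z : N.
Hypothesis z_zero : is_zero z.

Definition maps_rules : Prop :=
  forall A alpha a, In (A, alpha, a) (vg_rules G) -> In (A, alpha, f a) (vg_rules H).

Definition lifts_rules : Prop :=
  forall A alpha n, In (A, alpha, n) (vg_rules H) ->
    n = z \/ exists a, n = f a /\ In (A, alpha, a) (vg_rules G).

Lemma vg_derives_map :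
  maps_rules -> forall c c', clos_refl_trans _ (vg_step G) c c' ->
  clos_refl_trans _ (vg_step H) (c.1, f c.2) (c'.1, f c'.2).
Proof.
move=> mapG c c'.
elim=> [? ? [w1 [w2 [A [alpha [a [ruleG [-> ->]]]]]]] | ? | ? ? ? _ IH1 _ IH2].
- apply: rt_step; exists w1, w2, A, alpha, (f a).
  by split; [exact: mapG | rewrite /= fM].
- exact: rt_refl.
- exact: rt_trans IH1 IH2.
Qed.

Lemma vg_derives_zero c c' :
  clos_refl_trans_1n _ (vg_step H) c c' -> c.2 = z -> c'.2 = z.
Proof.
elim=> // ? ? ? [w1 [w2 [A [alpha [n [_ [_ ->]]]]]]] _ IH cz.
by apply: IH; rewrite /= cz (proj1 (z_zero n)).
Qed.

Lemma vg_derives_lift :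
  lifts_rules -> forall c c', clos_refl_trans_1n _ (vg_step H) c c' -> c'.2 <> z ->
  forall m, c.2 = f m ->
  exists m', c'.2 = f m' /\ clos_refl_trans _ (vg_step G) (c.1, m) (c'.1, m').
Proof.
move=> liftH c c'.
elim=> [? | ? c1 c'' [w1 [w2 [A [alpha [n [ruleH [e0 e1]]]]]]] derH IH] c''_nz m cm.
  by exists m; split=> //; exact: rt_refl.
case: (liftH _ _ _ ruleH) => [nz | [a [na ruleG]]].
  by case: c''_nz; apply: (vg_derives_zero derH); rewrite e1 /= nz (proj2 (z_zero _)).
have c1ma : c1.2 = f (m * a) by rewrite e1 /= cm na fM.
have [m' [c''m' derG]] := IH c''_nz _ c1ma.
exists m'; split=> //; apply: rt_trans derG; apply: rt_step.
by exists w1, w2, A, alpha, a; rewrite {1}e0 e1.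
Qed.

Lemma vg_language_transport :
  vg_start H = vg_start G ->
  f (munit M) = munit N ->
  (forall m, f m = munit N -> m = munit M) ->
  munit N <> z -> maps_rules -> lifts_rules ->
  forall w, vg_language G w <-> vg_language H w.
Proof.
move=> start f1 f_reflects1 one_nz mapG liftH w; rewrite /vg_language start; split=> der.
  by have := vg_derives_map mapG der; rewrite /= f1.
have [m' [m'1 derG]] := vg_derives_lift liftH (clos_rt_rt1n _ _ _ _ der) one_nz (esym f1).
by rewrite (f_reflects1 m' (esym m'1)) in derG.
Qed.

End GrammarTransport.

Section PrincipalFactor.
Variable M : AbsMonoid.

Definition J1 (a : M) : Prop := exists x y, x * a * y = munit M.

Lemma J1_unit : J1 (munit M).
Proof. by exists (munit M), (munit M); rewrite !mop1x. Qed.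

Lemma J1_mull a b : J1 (a * b) -> J1 a.
Proof. by move=> [x [y e]]; exists x, (b * y); rewrite mopA -(mopA x a b). Qed.

Lemma J1_mulr a b : J1 (a * b) -> J1 b.
Proof. by move=> [x [y e]]; exists (x * a), y; rewrite -(mopA x a b). Qed.

(* [None] is the adjoined zero. *)
Definition factor1 : Type := option {a : M | J1 a}.

Definition to_factor1 (a : M) : factor1 :=
  match excluded_middle_informative (J1 a) with
  | left h => Some (exist _ a h)
  | right _ => None
  end.

Definition factor1_mul (p q : factor1) : factor1 :=
  if (p, q) is (Some a, Some b) then to_factor1 (sval a * sval b) else None.

Lemma to_factor1_J1 a (h : J1 a) : to_factor1 a = Some (exist _ a h).
Proof.
rewrite /to_factor1; case: excluded_middle_informative => [h'|//].
by rewrite (proof_irrelevance _ h h').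
Qed.

Lemma to_factor1_val (p : {a | J1 a}) : to_factor1 (sval p) = Some p.
Proof. by case: p => a h; exact: to_factor1_J1. Qed.

Lemma to_factor1_notJ1 a : ~ J1 a -> to_factor1 a = None.
Proof. by rewrite /to_factor1; case: excluded_middle_informative. Qed.

Lemma to_factor1M a b :
  to_factor1 (a * b) = factor1_mul (to_factor1 a) (to_factor1 b).
Proof.
case: (classic (J1 a)) => [ha | ha].
  case: (classic (J1 b)) => [hb | hb].
    by rewrite (to_factor1_J1 ha) (to_factor1_J1 hb).
  rewrite (to_factor1_notJ1 hb) to_factor1_notJ1; first by case: (to_factor1 a).
  by move/J1_mulr.
by rewrite (to_factor1_notJ1 ha) to_factor1_notJ1 //; move/J1_mull.
Qed.

Lemma factor1_mulp0 p : factor1_mul p None = None.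
Proof. by case: p. Qed.

Lemma factor1_mulA p q r :
  factor1_mul p (factor1_mul q r) = factor1_mul (factor1_mul p q) r.
Proof.
case: p q r => [a|] [b|] [c|] //; rewrite ?factor1_mulp0 //.
by rewrite -(to_factor1_val a) -(to_factor1_val b) -(to_factor1_val c) -!to_factor1M mopA.
Qed.

Lemma factor1_mul1p p : factor1_mul (to_factor1 (munit M)) p = p.
Proof.
by case: p => [a|]; rewrite ?factor1_mulp0 // -(to_factor1_val a) -to_factor1M mop1x.
Qed.

Lemma factor1_mulp1 p : factor1_mul p (to_factor1 (munit M)) = p.
Proof.
by case: p => [a|] //; rewrite -(to_factor1_val a) -to_factor1M mopx1.
Qed.

Definition principal_factor1 : AbsMonoid :=
  Build_AbsMonoid factor1_mulA factor1_mul1p factor1_mulp1.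

Lemma factor1_zero : is_zero (None : principal_factor1).
Proof. by case. Qed.

Lemma factor1_unit_neq0 : munit principal_factor1 <> None.
Proof. by rewrite /= (to_factor1_J1 J1_unit). Qed.

Lemma to_factor1_reflects1 a : to_factor1 a = munit principal_factor1 -> a = munit M.
Proof.
rewrite /= (to_factor1_J1 J1_unit) /to_factor1.
by case: excluded_middle_informative => // h [].
Qed.

Lemma principal_factor1_zero_simple : zero_simple_monoid principal_factor1.
Proof.
exists None; split; first exact: factor1_zero.
split; last by exists (munit _), (munit _); rewrite mop1x; exact: factor1_unit_neq0.
move=> I [[p0 Ip0] idealI].
case: (classic (exists a, I (Some a))) => [[[a [x [y xay1]]] Ia] | noSome].
  have I1 : I (munit principal_factor1).
    have := idealI (to_factor1 x) _ (to_factor1 y) Ia.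
    by rewrite -[Some _]to_factor1_val /= -!to_factor1M xay1.
  by right=> p; have := idealI p _ (munit _) I1; rewrite !mopx1.
left=> p; split=> [|->]; first by case: p => // a Ia; case: noSome; exists a.
by case: p0 Ip0 => // a Ia; case: noSome; exists a.
Qed.

Definition map_grammar (V T : finType) (G : valence_grammar M V T) :
    valence_grammar principal_factor1 V T :=
  {| vg_rules :=
       List.map (fun r => (r.1.1, r.1.2, to_factor1 r.2 : principal_factor1)) (vg_rules G);
     vg_start := vg_start G |}.

(* Rules weighted by the zero can never occur in a successful derivation. *)
Definition restrict_grammar (V T : finType) (H : valence_grammar principal_factor1 V T) :
    valence_grammar M V T :=
  {| vg_rules :=
       flat_map (fun r => if r.2 is Some a then [:: (r.1.1, r.1.2, sval a)] else [::])
         (vg_rules H);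
     vg_start := vg_start H |}.

Lemma map_grammar_language (V T : finType) (G : valence_grammar M V T) w :
  vg_language G w <-> vg_language (map_grammar G) w.
Proof.
apply: (vg_language_transport (N := principal_factor1) to_factor1M factor1_zero) => //.
- exact: to_factor1_reflects1.
- exact: factor1_unit_neq0.
- by move=> A alpha a ruleG; apply/in_map_iff; exists (A, alpha, a).
- move=> A alpha n /in_map_iff [[[A' alpha'] a] [[<- <- <-] ruleG]].
  by right; exists a.
Qed.

Lemma restrict_grammar_language (V T : finType) (H : valence_grammar principal_factor1 V T) w :
  vg_language (restrict_grammar H) w <-> vg_language H w.
Proof.
apply: (vg_language_transport (N := principal_factor1) to_factor1M factor1_zero) => //.
- exact: to_factor1_reflects1.
- exact: factor1_unit_neq0.
- move=> A alpha a /in_flat_map [[[A' alpha'] [b|]] [ruleH]] //= [[<- <- <-] | //].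
  by rewrite to_factor1_val.
- move=> A alpha [b|] ruleH; [right | by left].
  exists (sval b); rewrite to_factor1_val; split=> //.
  by apply/in_flat_map; exists (A, alpha, Some b); split=> //; left.
Qed.

End PrincipalFactor.

Theorem corollary5 (M : AbsMonoid) :
  exists N : AbsMonoid,
    (simple_monoid N \/ zero_simple_monoid N) /\ same_Val_CF M N.
Proof.
exists (principal_factor1 M); split; first by right; exact: principal_factor1_zero_simple.
move=> T L; split=> [[V [G genG]] | [V [H genH]]].
  by exists V, (map_grammar G) => w; rewrite genG map_grammar_language.
by exists V, (restrict_grammar H) => w; rewrite genH restrict_grammar_language.
Qed.
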